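(* There is an absolute constant $C>0$ such that the following holds for every positive integer $n$. Let $N\ge \mathrm{tw}_8(Cn^3)$ and let $\phi:[N]^{(2)}\to\mathbb{R}$. Then there exist $S\subset[N]$ with $|S|=n$ and a function $\sigma:S^{(2)}\to\mathbb{R}$ such that $\sigma\sim\phi$ on $S$ (i.e. $\sigma\sim\phi|_{S^{(2)}}$) and $\sigma$ is exponentially separated.
   Context: $[N]=\{1,\dots,N\}$ with its natural order. For an ordered set $A$, $A^{(k)}=\{(a_1,\dots,a_k)\in A^k:a_1<\dots<a_k\}$. The tower function: $\mathrm{tw}_1(x)=x$, $\mathrm{tw}_k(x)=2^{\mathrm{tw}_{k-1}(x)}$. For functions $\phi,\phi':A^{(2)}\to\mathbb{R}$, write $\phi\sim\phi'$ if there exist $\rho_1,\rho_2:A\to\mathbb{R}$ with $\phi(a,b)=\phi'(a,b)-\rho_1(a)-\rho_2(b)$ for all $(a,b)\in A^{(2)}$. A function $\phi:B\to\mathbb{R}$ on a finite set $B$ is exponentially separated if either $\phi(b)\ge0$ for all $b\in B$ or $\phi(b)\le 0$ for all $b\in B$, and for any two distinct $b,b'\in B$ we have $|\phi(b)|\ge 2|\phi(b')|$ or $|\phi(b')|\ge 2|\phi(b)|$. *)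

From HB Require Import structures.
From mathcomp Require Import all_boot all_order all_algebra.
From mathcomp Require Import reals.
Set Implicit Arguments. Unset Strict Implicit. Unset Printing Implicit Defensive.
Import Order.TTheory GRing.Theory Num.Theory.
Local Open Scope ring_scope.

(* Tower function: tw 1 x = x, tw (k+1) x = 2 ^ (tw k x). *)
Definition tw (k x : nat) : nat := iter k.-1 (fun y => (2 ^ y)%N) x.

(* [N] = {1,...,N}; a subset S of [N] is a duplicate-free list of elements of [N].
   Functions on A^(2) are functions nat -> nat -> R, only consulted at (a,b)
   with a < b, a b in A. *)
Definition in_range (N : nat) (S : seq nat) : Prop :=
  uniq S /\ (forall a, a \in S -> (1 <= a <= N)%N).

Definition equiv_on {R : realType} (S : seq nat) (phi phi' : nat -> nat -> R) : Prop :=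
  exists rho1 rho2 : nat -> R,
    forall a b, a \in S -> b \in S -> (a < b)%N ->
      phi a b = phi' a b - rho1 a - rho2 b.

Definition exp_separated {R : realType} (S : seq nat) (phi : nat -> nat -> R) : Prop :=
  ((forall a b, a \in S -> b \in S -> (a < b)%N -> 0 <= phi a b) \/
   (forall a b, a \in S -> b \in S -> (a < b)%N -> phi a b <= 0)) /\
  (forall a b a' b', a \in S -> b \in S -> (a < b)%N ->
                     a' \in S -> b' \in S -> (a' < b')%N ->
                     (a, b) <> (a', b') ->
     2 * `|phi a' b'| <= `|phi a b| \/ 2 * `|phi a b| <= `|phi a' b'|).

From mathcomp Require Import all_boot all_order all_algebra.
From mathcomp Require Import reals.
From mathcomp Require Import zify lra.
Set Implicit Arguments. Unset Strict Implicit. Unset Printing Implicit Defensive.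

(* Write D(w,x,y,z) = (phi(w,y) - phi(w,z)) - (phi(x,y) - phi(x,z)) for
   w < x < y < z; every sigma ~ phi has the same second differences D.  Colour each
   8-subset of [N] by the signs of D on its quadruples and the order type of the |D|.
   Ramsey's theorem for 8-uniform hypergraphs (with its tower-type bound) gives a
   homogeneous set of 4n+12 points, on which D has constant sign and two bits are
   fixed: the direction in which the left pair (w,x), resp. the right pair (y,z), of a
   quadruple must be widened by one point to (at least) double D.  Widening by three
   points thus multiplies D by 8, and since homogeneity transports comparisons along
   such moves, the cells D(i,i+1,j,j+1) on the points 4i+4 are pairwise 8-separated.
   For each value of the two bits an explicit choice of rho1, rho2 puts every nonzero
   sigma(i,j) within a factor 2 of its own cell, so sigma is exponentially separated. *)

Lemma sorted_ltn_subseq (l s : seq nat) :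
  sorted ltn l -> sorted ltn s -> {subset l <= s} -> subseq l s.
Proof.
move=> sl ss sub; have us : uniq s := sorted_uniq ltn_trans ltnn ss.
apply/(subseq_uniqP us); apply: (irr_sorted_eq ltn_trans ltnn) => //.
  by apply: sorted_filter => //; exact: ltn_trans.
by move=> x; rewrite mem_filter; apply/idP/andP => [xl|[]//]; split => //; apply: sub.
Qed.

Lemma subseq_rcons_notin (T A : seq nat) x :
  subseq T (rcons A x) -> x \notin T -> subseq T A.
Proof.
elim: A T => [|a A IH] [|y T] //=.
- by case: ifP => // /eqP-> _; rewrite in_cons eqxx.
- case: ifP => [/eqP-> h|_ h] hx; last exact: IH.
  by apply: IH => //; move: hx; rewrite in_cons negb_or => /andP[].
Qed.

Fixpoint ksubseqs (s : seq nat) (k : nat) : seq (seq nat) :=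
  if k is k'.+1 then
    if s is x :: s' then map (cons x) (ksubseqs s' k') ++ ksubseqs s' k else [::]
  else [:: [::]].

Lemma mem_ksubseqs s T : subseq T s -> T \in ksubseqs s (size T).
Proof.
elim: s T => [|x s IH] [|y T] //=.
case: ifP => [/eqP-> sub|_ sub]; rewrite mem_cat; first by rewrite map_f // IH.
by apply/orP; right; apply: (IH (y :: T)).
Qed.

Lemma size_ksubseqs s k : size (ksubseqs s k) <= size s ^ k.
Proof.
elim: s k => [|x s IH] [|k] //=.
rewrite size_cat size_map (leq_trans (leq_add (IH k) (IH k.+1))) //.
have : size s ^ k <= (size s).+1 ^ k by case: k => // k; rewrite leq_exp2r.
rewrite !expnS; nia.
Qed.

Lemma pigeonhole_count (f : nat -> nat) (P : seq nat) r q :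
  0 < r -> (forall z, f z < r) -> r * q <= size P ->
  exists c, q <= count (fun z => f z == c) P.
Proof.
move=> r0 fr H.
case: (boolP [exists c : 'I_r, q <= count (fun z => f z == c) P]).
  by case/existsP => c hc; exists (nat_of_ord c).
rewrite negb_exists => /forallP small; exfalso.
suff below : forall r', r' <= r -> count (fun z => f z < r') P <= r' * q.-1.
  have := below r (leqnn r); have -> : count (fun z => f z < r) P = size P.
    by apply/eqP; rewrite -all_count; apply/allP => z _; apply: fr.
  by case: q H small {below} => [|q] H small; [have := small (Ordinal r0); rewrite leq0n | nia].
have countS r' : count (fun z => f z < r'.+1) P =
    count (fun z => f z < r') P + count (fun z => f z == r') P.
  by elim: (P) => //= z s ->; case: (ltngtP (f z) r') => h /=; lia.
elim => [|r' IH] r'r; first by rewrite (eq_count (a2 := pred0)) ?count_pred0.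
rewrite countS mulSnr; apply: leq_add; first exact: IH (ltnW r'r).
by have := small (Ordinal r'r); rewrite /= -ltnNge; lia.
Qed.

Lemma refine_pool (chi : seq nat -> nat) r (Ts : seq (seq nat)) (P : seq nat) m :
  0 < r -> (forall T, chi T < r) -> r ^ size Ts * m <= size P ->
  exists P', [/\ subseq P' P, m <= size P' &
    forall T z z', T \in Ts -> z \in P' -> z' \in P' -> chi (rcons T z) = chi (rcons T z')].
Proof.
move=> r0 chi_r; elim: Ts P => [|T Ts IH] P H.
  by exists P; split => //; rewrite expn0 mul1n in H.
have [c hc] : exists c, r ^ size Ts * m <= count (fun z => chi (rcons T z) == c) P.
  by apply: (@pigeonhole_count (fun z => chi (rcons T z)) P r) => //; rewrite mulnA -expnS.
have [P' [sP' szP' homP']] := IH _ (leq_trans hc (eq_leq (esym (size_filter _ _)))).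
exists P'; split => //; first exact: subseq_trans sP' (filter_subseq _ _).
move=> T0 z z'; rewrite in_cons => /orP[/eqP->|T0Ts] zP' z'P'; last exact: homP'.
move: (mem_subseq sP' zP') (mem_subseq sP' z'P').
by rewrite !mem_filter => /andP[/eqP-> _] /andP[/eqP-> _].
Qed.

Definition end_homogeneous (k : nat) (chi : seq nat -> nat) (A P : seq nat) :=
  forall T z z', subseq T A -> size T = k -> z \in A ++ P -> z' \in A ++ P ->
    all (fun y => y < z) T -> all (fun y => y < z') T -> chi (rcons T z) = chi (rcons T z').

(* (t+1)^k bounds the number of k-subsequences of the t+1 points chosen so far, and
   making the colour of each of them independent of the next point costs a factor r. *)
Fixpoint end_homogeneous_size (k r l t : nat) : nat :=
  if l is l'.+1 then r ^ (t.+1 ^ k) * end_homogeneous_size k r l' t.+1 + 1 else 0.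

Lemma end_homogeneous_rcons k chi (A P P' : seq nat) x :
  sorted ltn (A ++ x :: P) -> end_homogeneous k chi A (x :: P) -> subseq P' P ->
  (forall T z z', T \in ksubseqs (rcons A x) k -> z \in P' -> z' \in P' ->
     chi (rcons T z) = chi (rcons T z')) ->
  end_homogeneous k chi (rcons A x) P'.
Proof.
move=> srt homA sP' homP' T z z' sT szT zAP z'AP Tz Tz'.
have ltAx y : y \in A -> y < x.
  move=> yA; move: srt; rewrite sorted_pairwise ?pairwise_cat; last exact: ltn_trans.
  by case/and3P => /allP hA _ _; have /allP := hA y yA; apply; rewrite mem_head.
have [xT|xT] := boolP (x \in T).
  have inP' w : w \in rcons A x ++ P' -> all (fun y => y < w) T -> w \in P'.
    rewrite mem_cat mem_rcons in_cons => /orP[/orP[/eqP->|wA]|//] /allP /(_ x xT).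
      by rewrite ltnn.
    by have := ltAx _ wA; lia.
  by apply: homP'; [rewrite -szT mem_ksubseqs | exact: inP' | exact: inP'].
have toAP w : w \in rcons A x ++ P' -> w \in A ++ x :: P.
  by rewrite !mem_cat mem_rcons !in_cons => /orP[/orP[->|->]|/(mem_subseq sP')->];
    rewrite ?orbT.
by apply: homA; rewrite ?toAP // (subseq_rcons_notin sT xT).
Qed.

Lemma end_homogeneous_exists k r chi : 0 < r -> (forall T, chi T < r) ->
  forall l t A P, sorted ltn (A ++ P) -> size A = t -> end_homogeneous k chi A P ->
  end_homogeneous_size k r l t <= size P ->
  exists A', [/\ subseq A' P, size A' = l & end_homogeneous k chi (A ++ A') [::]].
Proof.
move=> r0 chi_r; elim => [|l IH] t A P srt szA homA hP.
  exists [::]; split => //; first exact: sub0seq.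
  move=> T z z'; rewrite !cats0 => sT szT zA z'A.
  by apply: homA; rewrite // mem_cat ?zA ?z'A.
case: P srt homA hP => [|x P] srt homA; first by rewrite /= addn1.
rewrite /= addn1 ltnS => hP.
have [P' [sP' szP' homP']] : exists P', [/\ subseq P' P,
    end_homogeneous_size k r l t.+1 <= size P' &
    forall T z z', T \in ksubseqs (rcons A x) k -> z \in P' -> z' \in P' ->
      chi (rcons T z) = chi (rcons T z')].
  apply: (refine_pool r0 chi_r); apply: leq_trans hP; rewrite leq_mul2r leq_pexp2l ?orbT //.
  by rewrite (leq_trans (size_ksubseqs _ _)) // size_rcons szA.
have srt' : sorted ltn (rcons A x ++ P').
  by apply: (subseq_sorted ltn_trans _ srt); rewrite cat_rcons cat_subseq //= eqxx.
have homAx := end_homogeneous_rcons srt homA sP' homP'.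
have szAx : size (rcons A x) = t.+1 by rewrite size_rcons szA.
have [A' [sA' szA' homA']] := IH _ _ _ srt' szAx homAx szP'.
exists (x :: A'); split => //=; first by rewrite eqxx (subseq_trans sA' sP').
  by rewrite szA'.
by rewrite -cat_rcons.
Qed.

(* Erdos-Rado: on a sequence end-homogeneous for (k+1)-sets, colouring the k-sets by
   their extension with the last point is a colouring of one dimension less. *)
Fixpoint ramsey_size (r m k : nat) : nat :=
  if k is k'.+1 then end_homogeneous_size k r (ramsey_size r m k').+1 0 else r * m.

Lemma ramsey_sorted r m k (chi : seq nat -> nat) (L : seq nat) :
  0 < r -> (forall T, chi T < r) -> sorted ltn L -> ramsey_size r m k <= size L ->
  exists H, [/\ subseq H L, size H = m & forall U V, subseq U H -> subseq V H ->
    size U = k.+1 -> size V = k.+1 -> chi U = chi V].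
Proof.
move=> r0; elim: k chi L => [|k IH] chi L chi_r srt hL.
  have [c hc] := @pigeonhole_count (fun z => chi [:: z]) L r m r0 (fun z => chi_r _) hL.
  exists (take m [seq z <- L | chi [:: z] == c]); split.
  - exact: subseq_trans (take_subseq _ _) (filter_subseq _ _).
  - by rewrite size_take size_filter; case: ltngtP hc => //; lia.
  move=> [|u [|? ?]] [|v [|? ?]] //= /[!sub1seq] /mem_take hu /mem_take hv _ _.
  by move: hu hv; rewrite !mem_filter => /andP[/eqP-> _] /andP[/eqP-> _].
have homL : end_homogeneous k.+1 chi [::] L by move=> T z z' /eqP->.
have [A [sAL szA homA]] :=
  @end_homogeneous_exists k.+1 r chi r0 chi_r (ramsey_size r m k).+1 0 [::] L srt erefl homL hL.
case/lastP: A sAL szA homA => [//|A zl] sAL szA homA /=; rewrite /= in homA.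
have srtA : sorted ltn (rcons A zl) := subseq_sorted ltn_trans sAL srt.
have ltAzl y : y \in A -> y < zl.
  move: srtA; rewrite sorted_pairwise; last exact: ltn_trans.
  by rewrite pairwise_rcons => /andP[/allP h _] /h.
have [|H [sHA szH homH]] := IH (fun T => chi (rcons T zl)) A (fun T => chi_r _)
  (subseq_sorted ltn_trans (subseq_rcons _ _) srtA); first by move: szA; rewrite size_rcons => -[->].
have sHAzl : subseq H (rcons A zl) := subseq_trans sHA (subseq_rcons _ _).
have srtH : sorted ltn H := subseq_sorted ltn_trans sHAzl srtA.
have chi_top U : subseq U H -> size U = k.+2 ->
    exists2 TU, subseq TU H /\ size TU = k.+1 & chi U = chi (rcons TU zl).
  case/lastP: U => [//|TU zU] sU; rewrite size_rcons => -[szTU].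
  have sTU : subseq TU H := subseq_trans (subseq_rcons _ _) sU.
  exists TU => //; apply: homA => //.
  - exact: subseq_trans sTU sHAzl.
  - by rewrite cats0 (mem_subseq sHAzl) // (mem_subseq sU) // mem_rcons mem_head.
  - by rewrite cats0 mem_rcons mem_head.
  - have := subseq_sorted ltn_trans sU srtH.
    by rewrite sorted_pairwise ?pairwise_rcons => [/andP[]|]; last exact: ltn_trans.
  - by apply/allP => y yT; apply/ltAzl/(mem_subseq sHA)/(mem_subseq sTU).
exists H; split => //; first exact: subseq_trans sHAzl sAL.
move=> U V sU sV szU szV.
have [TU [sTU szTU] ->] := chi_top U sU szU.
have [TV [sTV szTV] ->] := chi_top V sV szV.
exact: homH.
Qed.

Lemma end_homogeneous_size_le k r l t : 0 < k -> 0 < r ->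
  end_homogeneous_size k r l t <= (2 * r) ^ (l * (t + l + 1) ^ k).
Proof.
move=> k0 r0; elim: l t => [|l IH] t //=.
set E := (t + l.+1 + 1) ^ k.
have hE : t.+1 ^ k <= E by rewrite /E leq_exp2r //; lia.
have := IH t.+1; rewrite (_ : t.+1 + l + 1 = t + l.+1 + 1); last by lia.
rewrite -/E => hIH.
have X1 : 0 < (2 * r) ^ (l * E) by rewrite expn_gt0 muln_gt0 r0.
have h2 : r ^ t.+1 ^ k <= r ^ E by rewrite leq_pexp2l.
have h3 : 2 * r ^ E <= (2 * r) ^ E.
  by rewrite expnMn leq_mul2r -{1}(expn1 2) leq_pexp2l ?orbT // expn_gt0 addn1.
rewrite mulSn expnD.
have : r ^ t.+1 ^ k * end_homogeneous_size k r l t.+1 <= r ^ E * (2 * r) ^ (l * E).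
  exact: leq_mul.
have : 2 * r ^ E * (2 * r) ^ (l * E) <= (2 * r) ^ E * (2 * r) ^ (l * E).
  by rewrite leq_mul2r h3 orbT.
have : 0 < r ^ E * (2 * r) ^ (l * E) by rewrite muln_gt0 X1 expn_gt0 r0.
set a := r ^ E; set X := (2 * r) ^ (l * E); set b := r ^ t.+1 ^ k; set Y := (2 * r) ^ E.
rewrite -mulnA; lia.
Qed.

Lemma leq_iter_exp2 i y y' : y <= y' -> iter i (expn 2) y <= iter i (expn 2) y'.
Proof. by elim: i => //= i IH h; rewrite leq_pexp2l // IH. Qed.

Lemma exp2_addn_ge a c : 2 ^ a + c <= 2 ^ (a + c).
Proof.
rewrite expnD; have : c < 2 ^ c := ltn_expl _ (ltnSn 1).
have : 0 < 2 ^ a by rewrite expn_gt0.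
nia.
Qed.

Lemma iter_exp2_addn i y c : iter i (expn 2) y + c <= iter i (expn 2) (y + c).
Proof.
elim: i => //= i IH; apply: leq_trans (exp2_addn_ge _ _) _.
by rewrite leq_pexp2l.
Qed.

Lemma iter_exp2_muln i e y : 2 <= e -> 2 <= y ->
  e * iter i (expn 2) y <= iter i (expn 2) (e * y).
Proof.
move=> e2 y2; elim: i => //= i IH.
have h1 : e * 2 ^ iter i (expn 2) y <= 2 ^ (iter i (expn 2) y + e).
  by rewrite expnD mulnC leq_mul2l ltnW ?orbT // ltn_expl.
apply: leq_trans h1 _; rewrite leq_pexp2l //.
apply: leq_trans (iter_exp2_addn _ _ _) _.
apply: leq_iter_exp2; nia.
Qed.

Lemma tower_step rho j B y e : 2 <= e -> 2 <= y -> B <= iter j.+1 (expn 2) y ->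
  (2 ^ rho.+1) ^ ((B + 2) ^ e) <= iter j.+2 (expn 2) (e * y + 2 * e + rho.+1).
Proof.
move=> e2 y2 hB.
set a := iter j (expn 2) y.
rewrite [iter j.+2 _ _]/= -expnM.
have h1 : B + 2 <= 2 ^ (a + 2).
  have : 0 < 2 ^ a by rewrite expn_gt0.
  by move: hB; rewrite /= -/a expnD; lia.
have h2 : (B + 2) ^ e <= 2 ^ ((a + 2) * e) by rewrite expnM leq_exp2r // ltnW.
apply: (@leq_trans (2 ^ (2 ^ (rho.+1 + (a + 2) * e)))).
  rewrite leq_pexp2l // expnD leq_mul //; exact: ltnW (ltn_expl _ (ltnSn 1)).
rewrite leq_pexp2l // leq_pexp2l // -addnA.
have := iter_exp2_muln j e2 y2; have := iter_exp2_addn j (e * y) (2 * e + rho.+1).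
rewrite -/a; lia.
Qed.

Fixpoint ramsey_exponent (rho k : nat) : nat :=
  if k is k'.+1 then
    (if k' is _.+1 then k.+1 * ramsey_exponent rho k' + 2 * k.+1 + rho.+1 else 1)
  else 1.

Lemma ramsey_exponent_gt0 rho k : 0 < ramsey_exponent rho k.
Proof. by case: k => // -[] // k; rewrite /= addn_gt0 orbT. Qed.

Lemma ramsey_size_le_tower rho m k : 0 < k ->
  ramsey_size (2 ^ rho) m k <=
    iter k (expn 2) (ramsey_exponent rho k * (rho.+1 * (2 ^ rho * m + 2) ^ 2)).
Proof.
have r0 : 0 < 2 ^ rho by rewrite expn_gt0.
have e2 : 2 * 2 ^ rho = 2 ^ rho.+1 by rewrite expnS.
set y1 := rho.+1 * (2 ^ rho * m + 2) ^ 2.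
have y14 : 4 <= y1.
  have : 2 ^ 2 <= (2 ^ rho * m + 2) ^ 2 by rewrite leq_exp2r // leq_addl.
  by rewrite /y1; nia.
elim: k => // -[_ _|k IH _].
  change (ramsey_size (2 ^ rho) m 1) with (end_homogeneous_size 1 (2 ^ rho) (2 ^ rho * m).+1 0).
  rewrite [ramsey_exponent _ _]/= mul1n [iter 1 _ _]/=.
  apply: leq_trans (end_homogeneous_size_le _ _ (ltn0Sn 0) r0) _.
  rewrite e2 -expnM leq_pexp2l // !expn1 add0n /y1.
  have : 2 ^ rho * m + 1 < 2 ^ rho * m + 2 by lia.
  nia.
set B := ramsey_size (2 ^ rho) m k.+1 in IH *.
change (ramsey_size (2 ^ rho) m k.+2) with (end_homogeneous_size k.+2 (2 ^ rho) B.+1 0).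
apply: leq_trans (end_homogeneous_size_le _ _ (ltn0Sn k.+1) r0) _.
rewrite e2; apply: (@leq_trans ((2 ^ rho.+1) ^ ((B + 2) ^ k.+3))).
  by rewrite leq_pexp2l ?expn_gt0 // [in X in _ <= X]expnS add0n addn1 leq_mul // addn2.
have y2 : 2 <= ramsey_exponent rho k.+1 * y1 by have := ramsey_exponent_gt0 rho k.+1; nia.
apply: leq_trans (tower_step rho (isT : 2 <= k.+3) y2 (IH isT)) _.
apply: leq_iter_exp2; rewrite [ramsey_exponent _ k.+2]/= -/(ramsey_exponent rho k.+1).
by have := ramsey_exponent_gt0 rho k.+1; nia.
Qed.

Import Order.TTheory GRing.Theory Num.Theory.
Local Open Scope ring_scope.

Lemma doubling_chain (R : realDomainType) (u : nat -> R) k j :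
  0 <= u 0%N -> (k <= j)%N -> (forall t, (t < j)%N -> 2 * u t <= u t.+1) ->
  2 ^+ k * u 0%N <= u j.
Proof.
move=> u0 kj dbl; apply: le_trans (_ : 2 ^+ j * u 0%N <= _).
  by rewrite ler_wpM2r // ler_eXn2l // ltr1n.
elim: j {kj} dbl => [|j IH] dbl; first by rewrite mul1r.
rewrite exprS -mulrA; apply: le_trans (dbl j (ltnSn j)); apply: ler_wpM2l => //.
by apply: IH => t tj; apply/dbl/ltnW.
Qed.

Section SecondDifference.
Variables (R : zmodType) (Phi : nat -> nat -> R).

Definition diff2 (w x y z : nat) : R := (Phi w y - Phi w z) - (Phi x y - Phi x z).

Lemma diff2_splitl w x x' y z : diff2 w x y z + diff2 x x' y z = diff2 w x' y z.
Proof. by rewrite /diff2 addrA subrK. Qed.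

Lemma diff2_splitr w x y z z' : diff2 w x y z + diff2 w x z z' = diff2 w x y z'.
Proof. by rewrite /diff2 addrACA -opprD !addrA !subrK. Qed.

Lemma diff2_diagl w y z : diff2 w w y z = 0.
Proof. by rewrite /diff2 subrr. Qed.

Lemma diff2_diagr w x y : diff2 w x y y = 0.
Proof. by rewrite /diff2 !subrr. Qed.

End SecondDifference.

Section Doubling.
Variables (R : realDomainType) (Phi : nat -> nat -> R) (M : nat) (bL bR : bool).
Local Notation D := (diff2 Phi).

Hypothesis diff2_ge0 : forall w x y z,
  (w < x)%N -> (x < y)%N -> (y < z)%N -> (z < M)%N -> 0 <= D w x y z.
Hypothesis hbitL : forall w x x' y z,
  (w < x)%N -> (x < x')%N -> (x' < y)%N -> (y < z)%N -> (z < M)%N ->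
  (D w x y z <= D x x' y z) = bL.
Hypothesis hbitR : forall w x y z z',
  (w < x)%N -> (x < y)%N -> (y < z)%N -> (z < z')%N -> (z' < M)%N ->
  (D w x y z <= D w x z z') = bR.

Lemma diff2_doublel w x x' y z : bL ->
  (w < x)%N -> (x < x')%N -> (x' < y)%N -> (y < z)%N -> (z < M)%N ->
  2 * D w x y z <= D w x' y z.
Proof.
move=> hb wx xx' x'y yz zM; have := hbitL wx xx' x'y yz zM.
by rewrite hb -(diff2_splitl _ w x x' y z); lra.
Qed.

Lemma diff2_doublel_inner w x x' y z : ~~ bL ->
  (w < x)%N -> (x < x')%N -> (x' < y)%N -> (y < z)%N -> (z < M)%N ->
  2 * D x x' y z <= D w x' y z.
Proof.
move=> /negbTE hb wx xx' x'y yz zM; have := hbitL wx xx' x'y yz zM.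
by rewrite hb -(diff2_splitl _ w x x' y z) => /negbT; rewrite -ltNge; lra.
Qed.

Lemma diff2_doubler w x y z z' : bR ->
  (w < x)%N -> (x < y)%N -> (y < z)%N -> (z < z')%N -> (z' < M)%N ->
  2 * D w x y z <= D w x y z'.
Proof.
move=> hb wx xy yz zz' z'M; have := hbitR wx xy yz zz' z'M.
by rewrite hb -(diff2_splitr _ w x y z z'); lra.
Qed.

Lemma diff2_doubler_inner w x y z z' : ~~ bR ->
  (w < x)%N -> (x < y)%N -> (y < z)%N -> (z < z')%N -> (z' < M)%N ->
  2 * D w x z z' <= D w x y z'.
Proof.
move=> /negbTE hb wx xy yz zz' z'M; have := hbitR wx xy yz zz' z'M.
by rewrite hb -(diff2_splitr _ w x y z z') => /negbT; rewrite -ltNge; lra.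
Qed.

Lemma diff2_growl k w x x' y z : bL ->
  (w < x)%N -> (x + k <= x')%N -> (x' < y)%N -> (y < z)%N -> (z < M)%N ->
  2 ^+ k * D w x y z <= D w x' y z.
Proof.
move=> hb wx xx' x'y yz zM; have := @doubling_chain _ (fun t => D w (x + t) y z) k (x' - x).
rewrite addn0 subnKC; last lia.
apply; [apply: diff2_ge0 | | move=> t tx; rewrite addnS; apply: diff2_doublel]; lia.
Qed.

Lemma diff2_growl_inner k w x x' y z : ~~ bL ->
  (w + k <= x)%N -> (x < x')%N -> (x' < y)%N -> (y < z)%N -> (z < M)%N ->
  2 ^+ k * D x x' y z <= D w x' y z.
Proof.
move=> hb wx xx' x'y yz zM; have := @doubling_chain _ (fun t => D (x - t) x' y z) k (x - w).
rewrite subn0 subKn; last lia.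
apply; [apply: diff2_ge0 | | move=> t tx; rewrite subnS; apply: diff2_doublel_inner]; lia.
Qed.

Lemma diff2_growr k w x y z z' : bR ->
  (w < x)%N -> (x < y)%N -> (y < z)%N -> (z + k <= z')%N -> (z' < M)%N ->
  2 ^+ k * D w x y z <= D w x y z'.
Proof.
move=> hb wx xy yz zz' z'M; have := @doubling_chain _ (fun t => D w x y (z + t)) k (z' - z).
rewrite addn0 subnKC; last lia.
apply; [apply: diff2_ge0 | | move=> t tz; rewrite addnS; apply: diff2_doubler]; lia.
Qed.

Lemma diff2_growr_inner k w x y z z' : ~~ bR ->
  (w < x)%N -> (x < y)%N -> (y + k <= z)%N -> (z < z')%N -> (z' < M)%N ->
  2 ^+ k * D w x z z' <= D w x y z'.
Proof.
move=> hb wx xy yz zz' z'M; have := @doubling_chain _ (fun t => D w x (z - t) z') k (z - y).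
rewrite subn0 subKn; last lia.
apply; [apply: diff2_ge0 | | move=> t tz; rewrite subnS; apply: diff2_doubler_inner]; lia.
Qed.

End Doubling.

Definition pattern8 (M : nat) (l : seq nat) : bool :=
  [&& sorted ltn l, size l == 8%N & all (fun i => i < M)%N l].

Definition quad := ('I_8 * 'I_8 * 'I_8 * 'I_8)%type.

Definition quad_of (a b c d : nat) : quad := (inord a, inord b, inord c, inord d).

Definition diff2_at (R : zmodType) (Phi : nat -> nat -> R) (l : seq nat) (I : quad) : R :=
  let: (i0, i1, i2, i3) := I in
  diff2 Phi (nth 0%N l i0) (nth 0%N l i1) (nth 0%N l i2) (nth 0%N l i3).

Definition cmp_at (R : numDomainType) (Phi : nat -> nat -> R) (l : seq nat) (I J : quad) :=
  `|diff2_at Phi l J| <= `|diff2_at Phi l I|.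

Definition cmp_homogeneous (R : numDomainType) (Phi : nat -> nat -> R) (M : nat) :=
  forall l l', pattern8 M l -> pattern8 M l' -> forall I J, cmp_at Phi l I J = cmp_at Phi l' I J.

Definition bitL (R : numDomainType) (Phi : nat -> nat -> R) :=
  cmp_at Phi (iota 0 8) (quad_of 1 2 3 4) (quad_of 0 1 3 4).

Definition bitR (R : numDomainType) (Phi : nat -> nat -> R) :=
  cmp_at Phi (iota 0 8) (quad_of 0 1 3 4) (quad_of 0 1 2 3).

Definition diff2_seq (R : zmodType) (Phi : nat -> nat -> R) (X : seq nat) : R :=
  diff2 Phi (nth 0%N X 0) (nth 0%N X 1) (nth 0%N X 2) (nth 0%N X 3).

Lemma diff2_at_quad_of (R : zmodType) (Phi : nat -> nat -> R) l a b c d :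
  (a < 8)%N -> (b < 8)%N -> (c < 8)%N -> (d < 8)%N ->
  diff2_at Phi l (quad_of a b c d) = diff2 Phi (nth 0%N l a) (nth 0%N l b) (nth 0%N l c) (nth 0%N l d).
Proof. by move=> *; rewrite /diff2_at /quad_of !inordK. Qed.

Lemma pattern8_iota M : pattern8 (M + 8)%N (iota 0 8).
Proof. by rewrite /pattern8 iota_ltn_sorted size_iota; apply/allP => i; rewrite mem_iota; lia. Qed.

Lemma pattern8_pad M (U : seq nat) : (size U <= 8)%N -> all (fun u => u < M)%N U ->
  exists e, [/\ pattern8 (M + 8)%N e, {subset U <= e} &
    forall u, u \in e -> (u < M)%N -> u \in U].
Proof.
move=> szU /allP UM; set U' := [seq i <- iota 0 M | i \in U].
have U'M u : u \in U' -> (u < M)%N by rewrite mem_filter mem_iota => /andP[].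
have szU' : (size U' <= 8)%N.
  apply: leq_trans szU; apply: uniq_leq_size; first by rewrite filter_uniq ?iota_uniq.
  by move=> u; rewrite mem_filter => /andP[].
exists (U' ++ iota M (8 - size U')); split; last 2 first.
- by move=> u uU; rewrite mem_cat mem_filter uU mem_iota /= UM.
- by move=> u; rewrite mem_cat mem_filter => /orP[/andP[]//|]; rewrite mem_iota; lia.
rewrite /pattern8 size_cat size_iota subnKC // eqxx /=; apply/andP; split.
  rewrite sorted_pairwise ?pairwise_cat; last exact: ltn_trans.
  rewrite -!sorted_pairwise ?iota_ltn_sorted ?andbT; try exact: ltn_trans.
  apply/andP; split; first by apply/allrelP => a b /U'M; rewrite mem_iota; lia.
  by apply: sorted_filter; [exact: ltn_trans | exact: iota_ltn_sorted].
by apply/allP => u; rewrite mem_cat mem_iota => /orP[/U'M|]; lia.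
Qed.

Definition move_pt (p p' u : nat) : nat := if u == p then p' else u.

(* Moving p to p' does not make it cross u. *)
Definition move_ok (p p' u : nat) : bool :=
  [|| u == p, (u < p) && (u < p') | (p < u) && (p' < u)]%N.

Lemma move_pt_homo p p' u v :
  move_ok p p' u -> move_ok p p' v -> (u < v)%N -> (move_pt p p' u < move_pt p p' v)%N.
Proof. by rewrite /move_ok /move_pt; case: (u =P p) => [->|]; case: (v =P p) => [->|]; lia. Qed.

Section Homogeneous.
Variables (R : realDomainType) (Phi : nat -> nat -> R) (M : nat).
Local Notation D := (diff2 Phi).
Hypothesis hom : cmp_homogeneous Phi (M + 8)%N.

Lemma cmp_transfer (f : nat -> nat) (X Y : seq nat) :
  size X = 4%N -> size Y = 4%N -> all (fun u => u < M)%N (X ++ Y) ->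
  {in X ++ Y, forall u, f u < M}%N -> {in X ++ Y &, {homo f : u v / u < v}}%N ->
  (`|diff2_seq Phi Y| <= `|diff2_seq Phi X|) =
  (`|diff2_seq Phi (map f Y)| <= `|diff2_seq Phi (map f X)|).
Proof.
move=> szX szY UM fM fmono; set U := X ++ Y.
have [|e [pe Ue eU]] := pattern8_pad (U := U) _ UM; first by rewrite size_cat szX szY.
have /and3P[se /eqP sze ae] := pe.
(* Padding points lie above M, where g extends f by the identity. *)
pose g u := if (u < M)%N then f u else u.
have gU u : u \in U -> g u = f u by move=> uU; rewrite /g (allP UM).
have ge : pattern8 (M + 8)%N (map g e).
  apply/and3P; split; last 1 first.
  - apply/allP => _ /mapP[u ue ->]; rewrite /g; case: ifP => uM; last exact: (allP ae).
    by have := fM u (eU u ue uM); lia.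
  - apply: (homo_sorted_in (P := mem e)) se; last exact/allP.
    move=> u v ue ve uv; rewrite /g; case: ifP => uM; case: ifP => vM; try lia.
      exact: fmono (eU u ue uM) (eU v ve vM) uv.
    by have := fM u (eU u ue uM); lia.
  - by rewrite size_map sze.
have ix u : u \in U -> (index u e < 8)%N by move=> /Ue ue; rewrite -sze index_mem.
have ntX i : (i < 4)%N -> nth 0%N X i \in U by move=> i4; rewrite mem_cat mem_nth ?szX.
have ntY i : (i < 4)%N -> nth 0%N Y i \in U by move=> i4; rewrite mem_cat mem_nth ?szY ?orbT.
have := hom pe ge
  (quad_of (index (nth 0%N X 0) e) (index (nth 0%N X 1) e) (index (nth 0%N X 2) e) (index (nth 0%N X 3) e))
  (quad_of (index (nth 0%N Y 0) e) (index (nth 0%N Y 1) e) (index (nth 0%N Y 2) e) (index (nth 0%N Y 3) e)).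
rewrite /cmp_at !diff2_at_quad_of ?ix ?ntX ?ntY //.
rewrite !(nth_map 0%N) ?index_mem ?Ue ?ntX ?ntY // !nth_index ?Ue ?ntX ?ntY //.
by rewrite /diff2_seq !(nth_map 0%N) ?szX ?szY // !gU ?ntX ?ntY.
Qed.

Hypothesis diff2_ge0 : forall w x y z,
  (w < x)%N -> (x < y)%N -> (y < z)%N -> (z < M)%N -> 0 <= D w x y z.

Lemma bitL_eq w x x' y z :
  (w < x)%N -> (x < x')%N -> (x' < y)%N -> (y < z)%N -> (z < M)%N ->
  (D w x y z <= D x x' y z) = bitL Phi.
Proof.
move=> wx xx' x'y yz zM.
have pl : pattern8 (M + 8)%N [:: w; x; x'; y; z; M; M.+1; M.+2] by rewrite /pattern8 /=; lia.
rewrite /bitL -(hom pl (pattern8_iota M)) /cmp_at !diff2_at_quad_of //= !ger0_norm //;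
  apply: diff2_ge0; lia.
Qed.

Lemma bitR_eq w x y z z' :
  (w < x)%N -> (x < y)%N -> (y < z)%N -> (z < z')%N -> (z' < M)%N ->
  (D w x y z <= D w x z z') = bitR Phi.
Proof.
move=> wx xy yz zz' z'M.
have pl : pattern8 (M + 8)%N [:: w; x; y; z; z'; M; M.+1; M.+2] by rewrite /pattern8 /=; lia.
rewrite /bitR -(hom pl (pattern8_iota M)) /cmp_at !diff2_at_quad_of //= !ger0_norm //;
  apply: diff2_ge0; lia.
Qed.

Lemma diff2_ge0_weak w x y z :
  (w <= x)%N -> (x < y)%N -> (y <= z)%N -> (z < M)%N -> 0 <= D w x y z.
Proof.
rewrite leq_eqVlt => /orP[/eqP->|wx] xy; first by rewrite diff2_diagl.
by rewrite leq_eqVlt => /orP[/eqP->|yz] zM; [rewrite diff2_diagr | apply: diff2_ge0].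
Qed.

Lemma diff2_le_nested x0 x1 x2 x3 x0' x1' x2' x3' :
  (x0 <= x0')%N -> (x0' < x1')%N -> (x1' <= x1)%N -> (x1 < x2)%N ->
  (x2 <= x2')%N -> (x2' < x3')%N -> (x3' <= x3)%N -> (x3 < M)%N ->
  D x0' x1' x2' x3' <= D x0 x1 x2 x3.
Proof.
move=> *.
rewrite -(diff2_splitl _ x0 x0' x1) -(diff2_splitl _ x0' x1' x1).
rewrite -(diff2_splitr _ x0' x1' x2 x2' x3) -(diff2_splitr _ x0' x1' x2' x3' x3).
have : 0 <= D x0 x0' x2 x3 by apply: diff2_ge0_weak; lia.
have : 0 <= D x1' x1 x2 x3 by apply: diff2_ge0_weak; lia.
have : 0 <= D x0' x1' x2 x2' by apply: diff2_ge0_weak; lia.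
have : 0 <= D x0' x1' x3' x3 by apply: diff2_ge0_weak; lia.
lra.
Qed.

Local Notation mv p p' := (move_pt p p').

Lemma move_pt_lt p p' u : (p' < M)%N -> (u < M)%N -> (mv p p' u < M)%N.
Proof. by rewrite /move_pt; case: eqP. Qed.

Lemma diff2_move_le x0 x1 x2 x3 p p' :
  (x0 < x1)%N -> (x1 < x2)%N -> (x2 < x3)%N -> (x3 < M)%N ->
  all (move_ok p p') [:: x0; x1; x2; x3] ->
  (p = x0 -> p < p')%N -> (p = x1 -> p' < p)%N -> (p = x2 -> p < p')%N -> (p = x3 -> p' < p)%N ->
  D (mv p p' x0) (mv p p' x1) (mv p p' x2) (mv p p' x3) <= D x0 x1 x2 x3.
Proof.
move=> x01 x12 x23 x3M /and4P[o0 o1 o2 /andP[o3 _]] d0 d1 d2 d3.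
apply: diff2_le_nested; rewrite ?move_pt_homo // /move_pt; case: eqP => // e;
  [have := d0 (esym e) | have := d1 (esym e) | have := d2 (esym e) | have := d3 (esym e)]; lia.
Qed.

(* If moving one point inflates Y at least eightfold while shrinking X, then the
   comparison D(Y) <= D(X), which the move preserves, is in fact an eightfold gap. *)
Lemma diff2_gap_by_move x0 x1 x2 x3 y0 y1 y2 y3 p p' :
  (x0 < x1)%N -> (x1 < x2)%N -> (x2 < x3)%N -> (x3 < M)%N ->
  (y0 < y1)%N -> (y1 < y2)%N -> (y2 < y3)%N -> (y3 < M)%N -> (p' < M)%N ->
  all (move_ok p p') ([:: x0; x1; x2; x3] ++ [:: y0; y1; y2; y3]) ->
  (p = x0 -> p < p')%N -> (p = x1 -> p' < p)%N -> (p = x2 -> p < p')%N -> (p = x3 -> p' < p)%N ->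
  8 * D y0 y1 y2 y3 <= D (mv p p' y0) (mv p p' y1) (mv p p' y2) (mv p p' y3) ->
  D y0 y1 y2 y3 <= D x0 x1 x2 x3 -> 8 * D y0 y1 y2 y3 <= D x0 x1 x2 x3.
Proof.
move=> x01 x12 x23 x3M y01 y12 y23 y3M p'M ok d0 d1 d2 d3 grow le.
have UM : all (fun u => u < M)%N ([:: x0; x1; x2; x3] ++ [:: y0; y1; y2; y3]) by rewrite /=; lia.
have homo u v : u \in [:: x0; x1; x2; x3] ++ [:: y0; y1; y2; y3] ->
    v \in [:: x0; x1; x2; x3] ++ [:: y0; y1; y2; y3] -> (u < v)%N -> (mv p p' u < mv p p' v)%N.
  by move=> uU vU; apply: move_pt_homo; apply: (allP ok).
have mvM u : (u < M)%N -> (mv p p' u < M)%N := move_pt_lt p p'M.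
have := cmp_transfer (f := mv p p') (X := [:: x0; x1; x2; x3]) (Y := [:: y0; y1; y2; y3])
  erefl erefl UM (fun u uU => mvM u (allP UM u uU)) homo.
rewrite /diff2_seq /= !ger0_norm ?le ?diff2_ge0 ?homo ?mvM ?inE ?eqxx ?orbT //.
move: (ok); rewrite all_cat => /andP[okX _].
have := diff2_move_le x01 x12 x23 x3M okX d0 d1 d2 d3; lra.
Qed.

End Homogeneous.

(* Consecutive points are 4 apart, so a point can be moved by 3 without meeting
   its neighbours, and the offset 4 leaves room below the first one. *)
Definition spread (i : nat) : nat := (4 * i + 4)%N.

Definition exp_separated_idx (R : numDomainType) (n : nat) (sg : nat -> nat -> R) :=
  ((forall i j, (i < j)%N -> (j < n)%N -> 0 <= sg i j) \/
   (forall i j, (i < j)%N -> (j < n)%N -> sg i j <= 0)) /\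
  (forall i j i' j', (i < j)%N -> (j < n)%N -> (i' < j')%N -> (j' < n)%N ->
     (i != i') || (j != j') -> 2 * `|sg i' j'| <= `|sg i j| \/ 2 * `|sg i j| <= `|sg i' j'|).

Lemma move_ok_spread j k p' : p' = (spread j + 3)%N \/ p' = (spread j - 3)%N ->
  move_ok (spread j) p' (spread k).
Proof. by case=> ->; rewrite /move_ok /spread; lia. Qed.

Lemma move_pt_spread_self j p' : move_pt (spread j) p' (spread j) = p'.
Proof. by rewrite /move_pt eqxx. Qed.

Lemma move_pt_spread_other j k p' : k != j -> move_pt (spread j) p' (spread k) = spread k.
Proof. by move=> kj; rewrite /move_pt ifN_eq // /spread; lia. Qed.

Section Cells.
Variables (R : realDomainType) (Phi : nat -> nat -> R) (n : nat).
Local Notation D := (diff2 Phi).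
Local Notation M := (4 * n + 4)%N.
Local Notation E a b c d := (D (spread a) (spread b) (spread c) (spread d)).
Local Notation cell a b := (E a a.+1 b b.+1).

Hypothesis diff2_ge0 : forall w x y z,
  (w < x)%N -> (x < y)%N -> (y < z)%N -> (z < M)%N -> 0 <= D w x y z.
Hypothesis hom : cmp_homogeneous Phi (M + 8)%N.

Let hbitL := bitL_eq hom diff2_ge0.
Let hbitR := bitR_eq hom diff2_ge0.

Lemma spread_ge0 a b c d : (a < b)%N -> (b < c)%N -> (c < d)%N -> (d < n)%N -> 0 <= E a b c d.
Proof. by move=> *; apply: diff2_ge0; rewrite /spread; lia. Qed.

Lemma approx_lastl a b b' c d : bitL Phi ->
  (a <= b)%N -> (b < b')%N -> (b' < c)%N -> (c < d)%N -> (d < n)%N ->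
  E b b' c d <= E a b' c d /\ 15 * E a b' c d <= 16 * E b b' c d.
Proof.
move=> hb ab bb' b'c cd dn; have := spread_ge0 bb' b'c cd dn.
case: (ltngtP a b) ab => // [{}ab|->] _ p; last by split; lra.
have := spread_ge0 ab (ltn_trans bb' b'c) cd dn.
have := diff2_splitl Phi (spread a) (spread b) (spread b') (spread c) (spread d).
have : 2 ^+ 4 * E a b c d <= E a b' c d.
  by apply: (diff2_growl diff2_ge0 hbitL) => //; rewrite /spread; lia.
rewrite -natrX; lra.
Qed.

Lemma approx_firstl a a' b c d : ~~ bitL Phi ->
  (a < a')%N -> (a' <= b)%N -> (b < c)%N -> (c < d)%N -> (d < n)%N ->
  E a a' c d <= E a b c d /\ 15 * E a b c d <= 16 * E a a' c d.
Proof.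
move=> hb aa' a'b bc cd dn; have := spread_ge0 aa' (leq_ltn_trans a'b bc) cd dn.
case: (ltngtP a' b) a'b => // [{}a'b|<-] _ p; last by split; lra.
have := spread_ge0 a'b bc cd dn.
have := diff2_splitl Phi (spread a) (spread a') (spread b) (spread c) (spread d).
have : 2 ^+ 4 * E a' b c d <= E a b c d.
  by apply: (diff2_growl_inner diff2_ge0 hbitL) => //; rewrite /spread; lia.
rewrite -natrX; lra.
Qed.

Lemma approx_lastr a b c d d' : bitR Phi ->
  (a < b)%N -> (b < c)%N -> (c <= d)%N -> (d < d')%N -> (d' < n)%N ->
  E a b d d' <= E a b c d' /\ 15 * E a b c d' <= 16 * E a b d d'.
Proof.
move=> hb ab bc cd dd' d'n; have := spread_ge0 ab (leq_trans bc cd) dd' d'n.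
case: (ltngtP c d) cd => // [{}cd|->] _ p; last by split; lra.
have := spread_ge0 ab bc cd (ltn_trans dd' d'n).
have := diff2_splitr Phi (spread a) (spread b) (spread c) (spread d) (spread d').
have : 2 ^+ 4 * E a b c d <= E a b c d'.
  by apply: (diff2_growr diff2_ge0 hbitR) => //; rewrite /spread; lia.
rewrite -natrX; lra.
Qed.

Lemma approx_firstr a b c c' d : ~~ bitR Phi ->
  (a < b)%N -> (b < c)%N -> (c < c')%N -> (c' <= d)%N -> (d < n)%N ->
  E a b c c' <= E a b c d /\ 15 * E a b c d <= 16 * E a b c c'.
Proof.
move=> hb ab bc cc' c'd dn; have := spread_ge0 ab bc cc' (leq_ltn_trans c'd dn).
case: (ltngtP c' d) c'd => // [{}c'd|<-] _ p; last by split; lra.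
have := spread_ge0 ab (ltn_trans bc cc') c'd dn.
have := diff2_splitr Phi (spread a) (spread b) (spread c) (spread c') (spread d).
have : 2 ^+ 4 * E a b c' d <= E a b c d.
  by apply: (diff2_growr_inner diff2_ge0 hbitR) => //; rewrite /spread; lia.
rewrite -natrX; lra.
Qed.

Lemma cell_gap_by_move a b c d j p' :
  (a.+1 < b)%N -> (b.+1 < n)%N -> (c.+1 < d)%N -> (d.+1 < n)%N ->
  p' = (spread j + 3)%N \/ p' = (spread j - 3)%N -> (p' < M)%N ->
  (j = a -> spread j < p')%N -> (j = a.+1 -> p' < spread j)%N ->
  (j = b -> spread j < p')%N -> (j = b.+1 -> p' < spread j)%N ->
  8 * cell c d <= D (move_pt (spread j) p' (spread c)) (move_pt (spread j) p' (spread c.+1))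
                   (move_pt (spread j) p' (spread d)) (move_pt (spread j) p' (spread d.+1)) ->
  cell c d <= cell a b -> 8 * cell c d <= cell a b.
Proof.
move=> ab bn cd dn hp' p'M d0 d1 d2 d3 grow le.
have inj k : spread j = spread k -> j = k by rewrite /spread; lia.
have ok : all (move_ok (spread j) p') (map spread [:: a; a.+1; b; b.+1; c; c.+1; d; d.+1]).
  by rewrite all_map; apply/allP => k _; apply: move_ok_spread.
apply: (diff2_gap_by_move hom diff2_ge0 _ _ _ _ _ _ _ _ p'M ok
  (fun e => d0 (inj _ e)) (fun e => d1 (inj _ e)) (fun e => d2 (inj _ e)) (fun e => d3 (inj _ e))
  grow le); rewrite /spread; lia.
Qed.

Lemma cell_gap a b c d : (a.+1 < b)%N -> (b.+1 < n)%N -> (c.+1 < d)%N -> (d.+1 < n)%N ->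
  (a != c) || (b != d) -> cell c d <= cell a b -> 8 * cell c d <= cell a b.
Proof.
move=> ab bn cd dn neq le.
have [/andP[ca cb]|hc] := boolP ((c != a) && (c != b)).
  have [hb|hb] := boolP (bitL Phi).
    apply: (cell_gap_by_move (j := c.+1) (p' := (spread c.+1 + 3)%N)) => //; try (rewrite /spread; lia).
    rewrite move_pt_spread_self !move_pt_spread_other; try lia.
    have : 2 ^+ 3 * cell c d <= D (spread c) (spread c.+1 + 3)%N (spread d) (spread d.+1).
      by apply: (diff2_growl diff2_ge0 hbitL) => //; rewrite /spread; lia.
    by rewrite -natrX.
  apply: (cell_gap_by_move (j := c) (p' := (spread c - 3)%N)) => //; try (rewrite /spread; lia).
  rewrite move_pt_spread_self !move_pt_spread_other; try lia.
  have : 2 ^+ 3 * cell c d <= D (spread c - 3)%N (spread c.+1) (spread d) (spread d.+1).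
    by apply: (diff2_growl_inner diff2_ge0 hbitL) => //; rewrite /spread; lia.
  by rewrite -natrX.
have [da db] : d != a /\ d != b by lia.
have [hb|hb] := boolP (bitR Phi).
  apply: (cell_gap_by_move (j := d.+1) (p' := (spread d.+1 + 3)%N)) => //; try (rewrite /spread; lia).
  rewrite move_pt_spread_self !move_pt_spread_other; try lia.
  have : 2 ^+ 3 * cell c d <= D (spread c) (spread c.+1) (spread d) (spread d.+1 + 3)%N.
    by apply: (diff2_growr diff2_ge0 hbitR) => //; rewrite /spread; lia.
  by rewrite -natrX.
apply: (cell_gap_by_move (j := d) (p' := (spread d - 3)%N)) => //; try (rewrite /spread; lia).
rewrite move_pt_spread_self !move_pt_spread_other; try lia.
have : 2 ^+ 3 * cell c d <= D (spread c) (spread c.+1) (spread d - 3)%N (spread d.+1).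
  by apply: (diff2_growr_inner diff2_ge0 hbitR) => //; rewrite /spread; lia.
by rewrite -natrX.
Qed.

Lemma cells_separated a b c d : (a.+1 < b)%N -> (b.+1 < n)%N -> (c.+1 < d)%N -> (d.+1 < n)%N ->
  (a != c) || (b != d) -> 8 * cell c d <= cell a b \/ 8 * cell a b <= cell c d.
Proof.
move=> ab bn cd dn neq; have [le|lt] := lerP (cell c d) (cell a b).
  by left; apply: cell_gap.
by right; apply: cell_gap (ltW lt) => //; lia.
Qed.

Lemma separated_by_cells (sg : nat -> nat -> R) (supp : nat -> nat -> bool)
    (ka kb : nat -> nat -> nat) :
  (forall i j, (i < j)%N -> (j < n)%N -> ~~ supp i j -> sg i j = 0) ->
  (forall i j, (i < j)%N -> (j < n)%N -> supp i j ->
     [/\ ((ka i j).+1 < kb i j)%N, ((kb i j).+1 < n)%N,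
         cell (ka i j) (kb i j) <= `|sg i j| & `|sg i j| <= 2 * cell (ka i j) (kb i j)]) ->
  (forall i j i' j', supp i j -> supp i' j' -> ka i j = ka i' j' -> kb i j = kb i' j' ->
     i = i' /\ j = j') ->
  forall i j i' j', (i < j)%N -> (j < n)%N -> (i' < j')%N -> (j' < n)%N -> (i != i') || (j != j') ->
    2 * `|sg i' j'| <= `|sg i j| \/ 2 * `|sg i j| <= `|sg i' j'|.
Proof.
move=> sg0 sg_cell kab_inj i j i' j' ij jn i'j' j'n neq.
have [s1|/sg0 -> //] := boolP (supp i j); last by right; rewrite normr0 mulr0.
have [s2|/sg0 -> //] := boolP (supp i' j'); last by left; rewrite normr0 mulr0.
have [a1 a2 a3 a4] := sg_cell _ _ ij jn s1.
have [b1 b2 b3 b4] := sg_cell _ _ i'j' j'n s2.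
have dk : (ka i j != ka i' j') || (kb i j != kb i' j').
  case: eqP => //= e1; case: eqP => //= e2.
  by have [ii' jj'] := kab_inj _ _ _ _ s1 s2 e1 e2; move: neq; rewrite ii' jj' !eqxx.
have p1 : 0 <= cell (ka i j) (kb i j) by apply: spread_ge0; lia.
have p2 : 0 <= cell (ka i' j') (kb i' j') by apply: spread_ge0; lia.
by case: (cells_separated a1 a2 b1 b2 dk) => h; [left | right]; lra.
Qed.

Lemma normalize_LR : bitL Phi -> bitR Phi -> exists rho1 rho2 : nat -> R,
  exp_separated_idx n (fun i j => Phi (spread i) (spread j) - rho1 i - rho2 j).
Proof.
move=> hL hR.
exists (fun i => if i == 0%N then 0 else Phi (spread i) (spread i.+1) - Phi (spread 0) (spread i.+1)).
exists (fun j => Phi (spread 0) (spread j)).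
set sg := fun i j => _.
have sgE i j : sg i j = if i == 0%N then 0 else E 0 i i.+1 j.
  by rewrite /sg /diff2; case: eqP => [->|_]; lra.
split.
  left => i j ij jn; rewrite sgE; case: eqP => // i0.
  case: (ltngtP i.+1 j) => [lt|gt|<-]; [by apply: spread_ge0; lia | lia | by rewrite diff2_diagr].
apply: (separated_by_cells (supp := fun i j => ((0 < i) && (i.+1 < j))%N)
  (ka := fun i j => i.-1) (kb := fun i j => j.-1)).
- move=> i j ij jn nsupp; rewrite sgE; case: eqP => // i0.
  by rewrite (_ : j = i.+1) ?diff2_diagr //; move: nsupp; lia.
- move=> i j ij jn /andP[i0 ij1]; rewrite sgE; case: eqP => [|_]; first lia.
  case: (approx_lastl (a := 0) (b := i.-1) (b' := i) (c := i.+1) (d := j) hL); try lia => l1 l2.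
  case: (approx_lastr (a := i.-1) (b := i) (c := i.+1) (d := j.-1) (d' := j) hR); try lia => r1 r2.
  have p : 0 <= E 0 i i.+1 j by apply: spread_ge0; lia.
  by rewrite ger0_norm // !prednK; try lia; split; try lia; lra.
- move=> i j i' j' /andP[? ?] /andP[? ?] ? ?; lia.
Qed.

Lemma normalize_nLnR : ~~ bitL Phi -> ~~ bitR Phi -> exists rho1 rho2 : nat -> R,
  exp_separated_idx n (fun i j => Phi (spread i) (spread j) - rho1 i - rho2 j).
Proof.
move=> hL hR.
exists (fun i => Phi (spread i) (spread n.-1)).
exists (fun j => Phi (spread j.-1) (spread j) - Phi (spread j.-1) (spread n.-1)).
set sg := fun i j => _.
have sgE i j : sg i j = E i j.-1 j n.-1 by rewrite /sg /diff2; lra.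
have sg0 i j : (i < j)%N -> (j < n)%N -> ~~ ((i.+1 < j) && (j.+1 < n))%N -> sg i j = 0.
  move=> ij jn; rewrite sgE negb_and -!leqNgt => /orP[ji|nj].
    by rewrite (_ : j.-1 = i) ?diff2_diagl //; lia.
  by rewrite (_ : n.-1 = j) ?diff2_diagr //; lia.
split.
  left => i j ij jn; have [supp|/sg0 -> //] := boolP ((i.+1 < j) && (j.+1 < n))%N.
  by rewrite sgE; apply: spread_ge0; lia.
apply: (separated_by_cells (supp := fun i j => ((i.+1 < j) && (j.+1 < n))%N)
  (ka := fun i j => i) (kb := fun i j => j)) => //.
move=> i j ij jn /andP[ij1 jn1]; rewrite sgE.
case: (approx_firstl (a := i) (a' := i.+1) (b := j.-1) (c := j) (d := n.-1) hL); try lia => l1 l2.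
case: (approx_firstr (a := i) (b := i.+1) (c := j) (c' := j.+1) (d := n.-1) hR); try lia => r1 r2.
have p : 0 <= E i j.-1 j n.-1 by apply: spread_ge0; lia.
by rewrite ger0_norm //; split; try lia; lra.
Qed.

Lemma normalize_LnR : bitL Phi -> ~~ bitR Phi -> exists rho1 rho2 : nat -> R,
  exp_separated_idx n (fun i j => Phi (spread i) (spread j) - rho1 i - rho2 j).
Proof.
move=> hL hR.
exists (fun i => Phi (spread i) (spread n.-1) - Phi (spread 0) (spread n.-1)).
exists (fun j => Phi (spread 0) (spread j)).
set sg := fun i j => _.
have sgE i j : sg i j = - E 0 i j n.-1 by rewrite /sg /diff2; lra.
have sg0 i j : (i < j)%N -> (j < n)%N -> ~~ ((0 < i) && (j.+1 < n))%N -> sg i j = 0.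
  move=> ij jn; rewrite sgE negb_and -!leqNgt => /orP[i0|nj].
    by rewrite (_ : i = 0%N) ?diff2_diagl ?oppr0 //; lia.
  by rewrite (_ : n.-1 = j) ?diff2_diagr ?oppr0 //; lia.
split.
  right => i j ij jn; have [supp|/sg0 -> //] := boolP ((0 < i) && (j.+1 < n))%N.
  by rewrite sgE oppr_le0; apply: spread_ge0; lia.
apply: (separated_by_cells (supp := fun i j => ((0 < i) && (j.+1 < n))%N)
  (ka := fun i j => i.-1) (kb := fun i j => j)) => //.
- move=> i j ij jn /andP[i0 jn1]; rewrite sgE normrN.
  case: (approx_lastl (a := 0) (b := i.-1) (b' := i) (c := j) (d := n.-1) hL); try lia => l1 l2.
  case: (approx_firstr (a := i.-1) (b := i) (c := j) (c' := j.+1) (d := n.-1) hR); try lia => r1 r2.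
  have p : 0 <= E 0 i j n.-1 by apply: spread_ge0; lia.
  by rewrite ger0_norm // prednK; try lia; split; try lia; lra.
- move=> i j i' j' /andP[? ?] /andP[? ?] ? ?; lia.
Qed.

Fixpoint potential (b : nat) : R :=
  if b is b'.+1 then
    potential b' + (Phi (spread b'.-1) (spread b'.+1) - Phi (spread b'.-1) (spread b'))
  else 0.

(* With this choice - sigma(i,j) telescopes to the sum of E i t.-1 t t.+1 over
   i.+2 <= t < j, in which each term is close to E i i.+1 t t.+1 and the last one
   dominates. *)
Lemma normalize_nLR : ~~ bitL Phi -> bitR Phi -> exists rho1 rho2 : nat -> R,
  exp_separated_idx n (fun i j => Phi (spread i) (spread j) - rho1 i - rho2 j).
Proof.
move=> hL hR.
exists (fun i => Phi (spread i) (spread i.+1) - potential i.+1), potential.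
set sg := fun i j => _.
have sgS i j : sg i j.+1 = sg i j - E i j.-1 j j.+1 by rewrite /sg /= /diff2; lra.
have sg1 i : sg i i.+1 = 0 by rewrite /sg; lra.
have sg2 i : sg i i.+2 = 0 by rewrite sgS sg1 diff2_diagl; lra.
have key i k : (i.+2 + k < n)%N ->
    [/\ 0 <= - sg i (i.+2 + k)%N, 15 * - sg i (i.+2 + k)%N <= 16 * E i i.+1 i.+2 (i.+2 + k)%N
      & (0 < k)%N -> E i i.+1 (i.+2 + k).-1 (i.+2 + k)%N <= - sg i (i.+2 + k)%N].
  elim: k => [|k IH] ikn; first by rewrite !addn0 sg2 diff2_diagr; split => //; lra.
  have /IH[IH1 IH2 _] : (i.+2 + k < n)%N by lia.
  rewrite addnS sgS; set j := (i.+2 + k)%N in IH1 IH2 ikn *.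
  have p : 0 <= E i j.-1 j j.+1 by apply: spread_ge0; lia.
  case: (approx_firstl (a := i) (a' := i.+1) (b := j.-1) (c := j) (d := j.+1) hL); try lia => l1 l2.
  have := diff2_splitr Phi (spread i) (spread i.+1) (spread i.+2) (spread j) (spread j.+1).
  by split => //; lra.
split.
  right => i j ij jn; case: (ltngtP j i.+2) => [ji|ij2|->]; last by rewrite sg2.
    by rewrite (_ : j = i.+1) ?sg1 //; lia.
  have [k jk] : exists k, j = (i.+2 + k)%N by exists (j - i.+2)%N; lia.
  by subst j; have [+ _ _] := key i k jn; lra.
apply: (separated_by_cells (supp := fun i j => (i.+2 < j)%N)
  (ka := fun i j => i) (kb := fun i j => j.-1)) => //.
- move=> i j ij jn; rewrite -leqNgt leq_eqVlt ltnS => /orP[/eqP->|ji]; first by rewrite sg2.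
  by rewrite (_ : j = i.+1) ?sg1 //; lia.
- move=> i j ij jn ij2; have [k jk] : exists k, j = (i.+2 + k)%N by exists (j - i.+2)%N; lia.
  have := key i k; rewrite -jk => /(_ jn) [k1 k2 k3].
  have /k3 {}k3 : (0 < k)%N by lia.
  case: (approx_lastr (a := i) (b := i.+1) (c := i.+2) (d := j.-1) (d' := j) hR); try lia => r1 r2.
  have p : 0 <= E i i.+1 j.-1 j by apply: spread_ge0; lia.
  rewrite ler0_norm ?prednK; try lia; first by split; try lia; lra.
  by lra.
- move=> i j i' j' ? ? ? ?; lia.
Qed.

Lemma normalize_spread : exists rho1 rho2 : nat -> R,
  exp_separated_idx n (fun i j => Phi (spread i) (spread j) - rho1 i - rho2 j).
Proof.
case: (boolP (bitL Phi)) => hL; case: (boolP (bitR Phi)) => hR.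
- exact: normalize_LR.
- exact: normalize_LnR.
- exact: normalize_nLR.
- exact: normalize_nLnR.
Qed.

End Cells.

Definition pattern_bits := (quad * quad + quad)%type.

Definition pattern_type (R : numDomainType) (Phi : nat -> nat -> R) (l : seq nat) :
    {ffun pattern_bits -> bool} :=
  [ffun b => match b with
             | inl IJ => cmp_at Phi l IJ.1 IJ.2
             | inr K => 0 <= diff2_at Phi l K
             end].

Definition colour (R : numDomainType) (Phi : nat -> nat -> R) (l : seq nat) : nat :=
  enum_rank (pattern_type Phi l).

Definition ncolours_log : nat := #|{: pattern_bits}|.

Lemma colour_lt (R : numDomainType) (Phi : nat -> nat -> R) l :
  (colour Phi l < 2 ^ ncolours_log)%N.
Proof. by rewrite (leq_trans (ltn_ord _)) // card_ffun card_bool. Qed.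

Lemma colour_inj (R : numDomainType) (Phi : nat -> nat -> R) l l' :
  colour Phi l = colour Phi l' -> pattern_type Phi l = pattern_type Phi l'.
Proof. by move=> /val_inj /enum_rank_inj. Qed.

Lemma diff2_at_map (R : zmodType) (Phi : nat -> nat -> R) (h : nat -> nat) l I :
  size l = 8%N -> diff2_at Phi (map h l) I = diff2_at (fun i j => Phi (h i) (h j)) l I.
Proof.
by case: I => [[[i0 i1] i2] i3] szl; rewrite /diff2_at !(nth_map 0%N) ?szl ?ltn_ord.
Qed.

Lemma pattern_type_map (R : numDomainType) (Phi : nat -> nat -> R) (h : nat -> nat) l :
  size l = 8%N -> pattern_type Phi (map h l) = pattern_type (fun i j => Phi (h i) (h j)) l.
Proof.
by move=> szl; apply/ffunP => -[[I J]|K]; rewrite !ffunE /cmp_at ?diff2_at_map.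
Qed.

Definition tower_const : nat :=
  (ramsey_exponent ncolours_log 7 * (ncolours_log.+1 * (18 * 2 ^ ncolours_log) ^ 2))%N.

Lemma tower_const_gt0 : (0 < tower_const)%N.
Proof. by rewrite !muln_gt0 ramsey_exponent_gt0 !expn_gt0. Qed.

Lemma ramsey_size_le_tw n : (0 < n)%N ->
  (ramsey_size (2 ^ ncolours_log) (4 * n + 4 + 8) 7 <= tw 8 (tower_const * n ^ 3))%N.
Proof.
move=> n0; apply: leq_trans (ramsey_size_le_tower _ _ (ltn0Sn 6)) _.
apply: leq_iter_exp2; rewrite /tower_const -!mulnA leq_mul2l leq_mul2l; apply/orP; right.
apply/orP; right; set A := (2 ^ ncolours_log)%N.
have A1 : (0 < A)%N by rewrite expn_gt0.
have h1 : (A * (4 * n + 4 + 8) + 2 <= 18 * A * n)%N by nia.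
apply: (leq_trans (_ : _ <= (18 * A * n) ^ 2)%N); first by rewrite leq_exp2r.
have : (n ^ 2 <= n ^ 3)%N by rewrite leq_pexp2l.
rewrite expnMn (mulnC 18); nia.
Qed.

Lemma homogeneous_embedding (R : numDomainType) (phi : nat -> nat -> R) n N :
  (0 < n)%N -> (tw 8 (tower_const * n ^ 3) <= N)%N ->
  let m := (4 * n + 4 + 8)%N in
  exists h : nat -> nat, [/\ forall i j, (i < j)%N -> (j < m)%N -> (h i < h j)%N,
    forall i, (i < m)%N -> (1 <= h i <= N)%N &
    forall l l', pattern8 m l -> pattern8 m l' ->
      pattern_type (fun i j => phi (h i) (h j)) l = pattern_type (fun i j => phi (h i) (h j)) l'].
Proof.
move=> n0 hN m.
have [|H [sHL szH homH]] := ramsey_sorted (expn_gt0 2 ncolours_log) (colour_lt phi)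
  (iota_ltn_sorted 1 N) (k := 7) (m := m).
  by rewrite size_iota; apply: leq_trans (ramsey_size_le_tw n0) hN.
have srtH : sorted ltn H := subseq_sorted ltn_trans sHL (iota_ltn_sorted 1 N).
exists (nth 0%N H); split.
- move=> i j ij jm; apply: (sorted_ltn_nth ltn_trans 0%N srtH); rewrite ?inE ?szH //.
  exact: ltn_trans ij jm.
- move=> i im; have : nth 0%N H i \in iota 1 N by apply: (mem_subseq sHL); rewrite mem_nth ?szH.
  by rewrite mem_iota; lia.
have subH l : pattern8 m l -> subseq (map (nth 0%N H) l) H.
  case/and3P => sl _ /allP lm; apply: sorted_ltn_subseq => //.
    apply: (homo_sorted_in (P := fun i => (i < m)%N)) sl; last exact/allP.
    move=> i j _ jm ij; apply: (sorted_ltn_nth ltn_trans 0%N srtH); rewrite ?inE ?szH //.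
    exact: ltn_trans ij jm.
  by move=> _ /mapP[i /lm il ->]; rewrite mem_nth ?szH.
have sz8 l : pattern8 m l -> size l = 8%N by case/and3P => _ /eqP.
move=> l l' pl pl'.
rewrite -(pattern_type_map phi (nth 0%N H) (sz8 _ pl)) -(pattern_type_map phi (nth 0%N H) (sz8 _ pl')).
by apply/colour_inj/homH; rewrite ?subH ?size_map ?sz8.
Qed.

Lemma diff2_opp (R : zmodType) (Phi : nat -> nat -> R) w x y z :
  diff2 (fun i j => - Phi i j) w x y z = - diff2 Phi w x y z.
Proof. by rewrite /diff2 -!opprD. Qed.

Lemma cmp_homogeneous_opp (R : numDomainType) (Phi : nat -> nat -> R) M :
  cmp_homogeneous Phi M -> cmp_homogeneous (fun i j => - Phi i j) M.
Proof.
move=> hom l l' pl pl' [[[i0 i1] i2] i3] [[[j0 j1] j2] j3].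
by rewrite /cmp_at /diff2_at !diff2_opp !normrN; apply: (hom _ _ pl pl' (_, _, _, _) (_, _, _, _)).
Qed.

Lemma exp_separated_idx_opp (R : numDomainType) n (sg sg' : nat -> nat -> R) :
  (forall i j, sg' i j = - sg i j) -> exp_separated_idx n sg -> exp_separated_idx n sg'.
Proof.
move=> e [sgn gap]; split; last by move=> *; rewrite !e !normrN; apply: gap.
by case: sgn => h; [right | left] => i j ij jn; rewrite e ?oppr_le0 ?oppr_ge0; apply: h.
Qed.

Lemma normalize_homogeneous (R : realDomainType) (Phi : nat -> nat -> R) n :
  (forall l l', pattern8 (4 * n + 4 + 8)%N l -> pattern8 (4 * n + 4 + 8)%N l' ->
     pattern_type Phi l = pattern_type Phi l') ->
  exists rho1 rho2 : nat -> R,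
    exp_separated_idx n (fun i j => Phi (spread i) (spread j) - rho1 i - rho2 j).
Proof.
move=> htype.
have hom : cmp_homogeneous Phi (4 * n + 4 + 8)%N.
  move=> l l' pl pl' I J.
  by have := congr1 (fun f : {ffun pattern_bits -> bool} => f (inl (I, J))) (htype l l' pl pl'); rewrite !ffunE.
have sign w x y z : (w < x)%N -> (x < y)%N -> (y < z)%N -> (z < 4 * n + 4)%N ->
    (0 <= diff2 Phi w x y z) = (0 <= diff2 Phi 0 1 2 3).
  move=> wx xy yz zM; set M := (4 * n + 4)%N.
  have pl : pattern8 (M + 8)%N [:: w; x; y; z; M; M.+1; M.+2; M.+3] by rewrite /pattern8 /=; lia.
  have := congr1 (fun f : {ffun pattern_bits -> bool} => f (inr (quad_of 0 1 2 3))) (htype _ _ pl (pattern8_iota M)).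
  by rewrite !ffunE !diff2_at_quad_of.
have [pos|neg] := boolP (0 <= diff2 Phi 0 1 2 3).
  by apply: (normalize_spread _ hom) => w x y z *; rewrite sign.
have [|rho1 [rho2 sep]] := normalize_spread _ (cmp_homogeneous_opp hom).
  move=> w x y z wx xy yz zM; rewrite diff2_opp oppr_ge0.
  by move: neg; rewrite -(sign w x y z) // -ltNge => /ltW.
exists (fun i => - rho1 i), (fun j => - rho2 j).
by apply: exp_separated_idx_opp sep => i j /=; rewrite !opprB !opprK; lra.
Qed.

Lemma exp_separated_transport (R : realType) (phi : nat -> nat -> R) n N (g : nat -> nat)
    (rho1 rho2 : nat -> R) :
  (forall i j, (i < j)%N -> (j < n)%N -> (g i < g j)%N) ->
  (forall i, (i < n)%N -> (1 <= g i <= N)%N) ->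
  exp_separated_idx n (fun i j => phi (g i) (g j) - rho1 i - rho2 j) ->
  exists (S : seq nat) (sigma : nat -> nat -> R),
    [/\ in_range N S, size S = n, equiv_on S sigma phi & exp_separated S sigma].
Proof.
move=> gmono grange [sgn gap]; set S := map g (iota 0 n).
have szS : size S = n by rewrite size_map size_iota.
have srtS : sorted ltn S.
  apply: (homo_sorted_in (P := fun i => (i < n)%N)) (iota_ltn_sorted 0 n).
    by move=> i j _ jn ij; apply: gmono.
  by apply/allP => i; rewrite mem_iota.
have memS a : a \in S -> (index a S < n)%N /\ a = g (index a S).
  move=> aS; have ia : (index a S < n)%N by rewrite -szS index_mem.
  by split=> //; rewrite -[in LHS](nth_index 0%N aS) (nth_map 0%N) ?size_iota ?nth_iota.
have ordS a b : a \in S -> b \in S -> (a < b)%N -> (index a S < index b S)%N.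
  move=> /memS[ia ea] /memS[ib eb] ab; case: (ltngtP (index a S) (index b S)) => // [ba|e].
    by have := gmono _ _ ba ia; rewrite -ea -eb; lia.
  by move: ab; rewrite ea eb e; lia.
have sgE a b : a \in S -> b \in S -> phi a b = phi (g (index a S)) (g (index b S)).
  by move=> /memS[_ <-] /memS[_ <-].
exists S, (fun a b => phi a b - rho1 (index a S) - rho2 (index b S)); split => //.
- split; first exact: (sorted_uniq ltn_trans ltnn srtS).
  by move=> a /memS[ia ->]; apply: grange.
- by exists (fun a => rho1 (index a S)), (fun b => rho2 (index b S)).
split.
  by case: sgn => h; [left | right] => a b aS bS ab; rewrite sgE //;
    apply: h (ordS _ _ aS bS ab) _; case: (memS b bS).
move=> a b a' b' aS bS ab a'S b'S a'b' neq; rewrite (sgE a b) // (sgE a' b') //.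
have [[ib eb] [ib' eb']] := (memS _ bS, memS _ b'S).
apply: gap (ordS _ _ aS bS ab) ib (ordS _ _ a'S b'S a'b') ib' _.
case: (eqVneq (index a S) (index a' S)) => [ea|] //=; case: eqVneq => [ebb'|] //=.
by case: neq; rewrite (proj2 (memS _ aS)) (proj2 (memS _ a'S)) eb eb' ea ebb'.
Qed.

Theorem lemma4p1 :
  exists C : nat, (0 < C)%N /\
  forall (R : realType) (n N : nat), (0 < n)%N ->
    (tw 8 (C * n ^ 3) <= N)%N ->
    forall phi : nat -> nat -> R,
      exists (S : seq nat) (sigma : nat -> nat -> R),
        [/\ in_range N S, size S = n, equiv_on S sigma phi & exp_separated S sigma].
Proof.
exists tower_const; split; first exact: tower_const_gt0.
move=> R n N n0 hN phi.
have [h [hmono hrange htype]] := homogeneous_embedding phi n0 hN.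
have [rho1 [rho2 sep]] := normalize_homogeneous htype.
apply: (exp_separated_transport (g := h \o spread) _ _ sep) => [i j ij jn | i i_n] /=.
  by apply: hmono; rewrite /spread; lia.
by apply: hrange; rewrite /spread; lia.
Qed.
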